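(* Let $(\mathcal{D},\wedge,S^0)$ be a closed symmetric monoidal model category, $T$ a cofibrant object, $\Omega=Hom(T,-)$, and $X$ a symmetric $T$-spectrum. Then for every $n\ge0$ there is an isomorphism $(\Theta^\infty X)_n\cong(R^\infty X)_n$.
   Context: A symmetric $T$-spectrum has objects $X_n$ with $\Sigma_n$-actions and structure maps $\sigma_n:X_n\wedge T\to X_{n+1}$ with equivariant iterates; $\tilde\sigma_n:X_n\to\Omega X_{n+1}$ are the adjoints. $(\Theta^\infty X)_n=\mathrm{colim}_l\Omega^lX_{n+l}$ along $\Omega^l\tilde\sigma$. $(shX)_n=X_{1+n}$ (with $\Sigma_n$ acting on the last $n$ coordinates), $R=\Omega\circ sh$, $\tilde\lambda_X:X\to RX$ levelwise adjoint to $\chi_{n,1}\circ\sigma_n:X_n\wedge T\to X_{1+n}$ ($\chi_{a,b}\in\Sigma_{a+b}$ the block permutation), and $R^\infty X=\mathrm{colim}_kR^kX$ along $R^k\tilde\lambda_X$, so that $(R^\infty X)_n=\mathrm{colim}_l\Omega^lX_{l+n}$ along $\Omega^l\tilde\lambda$. *)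

From mathcomp Require Import all_boot all_fingroup zify.

Set Implicit Arguments.
Unset Strict Implicit.
Unset Printing Implicit Defensive.

Declare Scope cat_scope.
Delimit Scope cat_scope with cat.
Local Open Scope cat_scope.

Record category := Category {
  ob :> Type;
  hom : ob -> ob -> Type;
  idm : forall A, hom A A;
  comp : forall A B C, hom B C -> hom A B -> hom A C;
  comp_assoc : forall A B C D (h : hom C D) (g : hom B C) (f : hom A B),
      comp h (comp g f) = comp (comp h g) f;
  comp_id_l : forall A B (f : hom A B), comp (idm B) f = f;
  comp_id_r : forall A B (f : hom A B), comp f (idm A) = f }.

Arguments hom {c} A B.
Arguments idm {c} A.
Arguments comp {c A B C} g f.
Infix "⊚" := comp (at level 40, left associativity) : cat_scope.

Definition is_iso (C : category) (A B : C) (f : hom A B) : Prop :=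
  exists g : hom B A, g ⊚ f = idm A /\ f ⊚ g = idm B.

Definition isomorphic (C : category) (A B : C) : Prop :=
  exists f : hom A B, is_iso f.

Record smallcat := SmallCat {
  sob : Type;
  shom : sob -> sob -> Type;
  sid : forall i, shom i i;
  scomp : forall i j k, shom j k -> shom i j -> shom i k;
  scomp_assoc : forall i j k l (h : shom k l) (g : shom j k) (f : shom i j),
      scomp h (scomp g f) = scomp (scomp h g) f;
  scomp_id_l : forall i j (f : shom i j), scomp (sid j) f = f;
  scomp_id_r : forall i j (f : shom i j), scomp f (sid i) = f }.
Arguments shom {s} i j.
Arguments sid {s} i.
Arguments scomp {s i j k} g f.

Record diagram (C : category) (J : smallcat) := Diagram {
  dob : sob J -> C;
  dmap : forall i j, shom i j -> hom (dob i) (dob j);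
  dmap_id : forall i, dmap (sid i) = idm (dob i);
  dmap_comp : forall i j k (g : shom j k) (f : shom i j),
      dmap (scomp g f) = dmap g ⊚ dmap f }.
Arguments dob {C J} d i.
Arguments dmap {C J} d {i j} u.

Definition is_cocone (C : category) (J : smallcat) (d : diagram C J)
  (L : C) (c : forall i, hom (dob d i) L) : Prop :=
  forall i j (u : shom i j), c j ⊚ dmap d u = c i.

Definition is_colimit (C : category) (J : smallcat) (d : diagram C J)
  (L : C) (c : forall i, hom (dob d i) L) : Prop :=
  is_cocone c /\
  forall (L' : C) (c' : forall i, hom (dob d i) L'), is_cocone c' ->
    exists u : hom L L', (forall i, u ⊚ c i = c' i) /\
      forall v : hom L L', (forall i, v ⊚ c i = c' i) -> v = u.

Definition is_cone (C : category) (J : smallcat) (d : diagram C J)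
  (L : C) (c : forall i, hom L (dob d i)) : Prop :=
  forall i j (u : shom i j), dmap d u ⊚ c i = c j.

Definition is_limit (C : category) (J : smallcat) (d : diagram C J)
  (L : C) (c : forall i, hom L (dob d i)) : Prop :=
  is_cone c /\
  forall (L' : C) (c' : forall i, hom L' (dob d i)), is_cone c' ->
    exists u : hom L' L, (forall i, c i ⊚ u = c' i) /\
      forall v : hom L' L, (forall i, c i ⊚ v = c' i) -> v = u.

Definition cocomplete (C : category) : Prop :=
  forall (J : smallcat) (d : diagram C J),
    exists (L : C) (c : forall i, hom (dob d i) L), is_colimit c.

Definition complete (C : category) : Prop :=
  forall (J : smallcat) (d : diagram C J),
    exists (L : C) (c : forall i, hom L (dob d i)), is_limit c.

Definition is_initial (C : category) (I : C) : Prop :=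
  forall A : C, inhabited (hom I A) /\ forall f g : hom I A, f = g.

Definition is_pushout (C : category) (A B D P : C) (f : hom A B) (g : hom A D)
  (i1 : hom B P) (i2 : hom D P) : Prop :=
  i1 ⊚ f = i2 ⊚ g /\
  forall (Q : C) (j1 : hom B Q) (j2 : hom D Q), j1 ⊚ f = j2 ⊚ g ->
    exists u : hom P Q, (u ⊚ i1 = j1 /\ u ⊚ i2 = j2) /\
      forall v : hom P Q, v ⊚ i1 = j1 -> v ⊚ i2 = j2 -> v = u.

Definition is_seq_colimit (C : category) (F : nat -> C)
  (f : forall l, hom (F l) (F l.+1)) (L : C) (c : forall l, hom (F l) L) : Prop :=
  (forall l, c l.+1 ⊚ f l = c l) /\
  forall (L' : C) (c' : forall l, hom (F l) L'), (forall l, c' l.+1 ⊚ f l = c' l) ->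
    exists u : hom L L', (forall l, u ⊚ c l = c' l) /\
      forall v : hom L L', (forall l, v ⊚ c l = c' l) -> v = u.

Record closed_symmon (C : category) := ClosedSymMon {
  tens : C -> C -> C;
  tmap : forall A A' B B', hom A A' -> hom B B' -> hom (tens A B) (tens A' B');
  tmap_id : forall A B, tmap (idm A) (idm B) = idm (tens A B);
  tmap_comp : forall A A' A'' B B' B'' (f' : hom A' A'') (f : hom A A')
      (g' : hom B' B'') (g : hom B B'),
      tmap (f' ⊚ f) (g' ⊚ g) = tmap f' g' ⊚ tmap f g;
  unit : C;
  assoc : forall A B D, hom (tens (tens A B) D) (tens A (tens B D));
  assoc_inv : forall A B D, hom (tens A (tens B D)) (tens (tens A B) D);
  assoc_inv_l : forall A B D, assoc_inv A B D ⊚ assoc A B D = idm _;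
  assoc_inv_r : forall A B D, assoc A B D ⊚ assoc_inv A B D = idm _;
  assoc_nat : forall A A' B B' D D' (f : hom A A') (g : hom B B') (h : hom D D'),
      assoc A' B' D' ⊚ tmap (tmap f g) h = tmap f (tmap g h) ⊚ assoc A B D;
  lunit : forall A, hom (tens unit A) A;
  lunit_iso : forall A, is_iso (lunit A);
  lunit_nat : forall A A' (f : hom A A'), lunit A' ⊚ tmap (idm unit) f = f ⊚ lunit A;
  runit : forall A, hom (tens A unit) A;
  runit_iso : forall A, is_iso (runit A);
  runit_nat : forall A A' (f : hom A A'), runit A' ⊚ tmap f (idm unit) = f ⊚ runit A;
  braid : forall A B, hom (tens A B) (tens B A);
  braid_nat : forall A A' B B' (f : hom A A') (g : hom B B'),
      braid A' B' ⊚ tmap f g = tmap g f ⊚ braid A B;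
  braid_sym : forall A B, braid B A ⊚ braid A B = idm (tens A B);
  pentagon : forall A B D E,
      assoc A B (tens D E) ⊚ assoc (tens A B) D E
      = tmap (idm A) (assoc B D E) ⊚ assoc A (tens B D) E ⊚ tmap (assoc A B D) (idm E);
  triangle : forall A B,
      tmap (idm A) (lunit B) ⊚ assoc A unit B = tmap (runit A) (idm B);
  hexagon : forall A B D,
      assoc B D A ⊚ braid A (tens B D) ⊚ assoc A B D
      = tmap (idm B) (braid A D) ⊚ assoc B A D ⊚ tmap (braid A B) (idm D);
  ihom : C -> C -> C;
  ihom_map : forall A B B', hom B B' -> hom (ihom A B) (ihom A B');
  ihom_map_id : forall A B, ihom_map A (idm B) = idm (ihom A B);
  ihom_map_comp : forall A B B' B'' (g : hom B' B'') (f : hom B B'),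
      ihom_map A (g ⊚ f) = ihom_map A g ⊚ ihom_map A f;
  curry : forall A B D, hom (tens B A) D -> hom B (ihom A D);
  curry_inj : forall A B D (f g : hom (tens B A) D), curry f = curry g -> f = g;
  curry_surj : forall A B D (g : hom B (ihom A D)), exists f, curry f = g;
  curry_nat_l : forall A B B' D (h : hom B' B) (f : hom (tens B A) D),
      curry (f ⊚ tmap h (idm A)) = curry f ⊚ h;
  curry_nat_r : forall A B D D' (k : hom D D') (f : hom (tens B A) D),
      curry (k ⊚ f) = ihom_map A k ⊚ curry f }.

Arguments tens {C} c A B.
Arguments tmap {C} c {A A' B B'} f g.
Arguments unit {C} c.
Arguments assoc {C} c A B D.
Arguments assoc_inv {C} c A B D.
Arguments runit {C} c A.
Arguments braid {C} c A B.
Arguments ihom {C} c A B.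
Arguments ihom_map {C} c A {B B'} f.
Arguments curry {C} c {A B D} f.

(* Model categories (closed model category, cf. Hovey Def. 1.1.3,      *)
(* without functoriality of factorizations) and monoidal model         *)
(* categories (Hovey Def. 4.2.6)                                        *)
Definition morclass (C : category) := forall A B : C, hom A B -> Prop.

Definition is_retract (C : category) (A B X Y : C) (f : hom A B) (g : hom X Y) : Prop :=
  exists (i : hom A X) (r : hom X A) (i' : hom B Y) (r' : hom Y B),
    [/\ r ⊚ i = idm A, r' ⊚ i' = idm B, g ⊚ i = i' ⊚ f & f ⊚ r = r' ⊚ g].

Definition llp (C : category) (A B X Y : C) (i : hom A B) (p : hom X Y) : Prop :=
  forall (u : hom A X) (v : hom B Y), p ⊚ u = v ⊚ i ->
    exists h : hom B X, h ⊚ i = u /\ p ⊚ h = v.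

Record model_structure (C : category) := ModelStructure {
  we : morclass C;
  cof : morclass C;
  fib : morclass C;
  mc_complete : complete C;
  mc_cocomplete : cocomplete C;
  mc_2of3_gf : forall A B D (f : hom A B) (g : hom B D), we f -> we g -> we (g ⊚ f);
  mc_2of3_g : forall A B D (f : hom A B) (g : hom B D), we f -> we (g ⊚ f) -> we g;
  mc_2of3_f : forall A B D (f : hom A B) (g : hom B D), we g -> we (g ⊚ f) -> we f;
  mc_retract_we : forall A B X Y (f : hom A B) (g : hom X Y), is_retract f g -> we g -> we f;
  mc_retract_cof : forall A B X Y (f : hom A B) (g : hom X Y), is_retract f g -> cof g -> cof f;
  mc_retract_fib : forall A B X Y (f : hom A B) (g : hom X Y), is_retract f g -> fib g -> fib f;
  mc_lift_acof : forall A B X Y (i : hom A B) (p : hom X Y),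
      cof i -> we i -> fib p -> llp i p;
  mc_lift_afib : forall A B X Y (i : hom A B) (p : hom X Y),
      cof i -> fib p -> we p -> llp i p;
  mc_fact_acof : forall A B (f : hom A B),
      exists (E : C) (i : hom A E) (p : hom E B), [/\ cof i, we i, fib p & p ⊚ i = f];
  mc_fact_afib : forall A B (f : hom A B),
      exists (E : C) (i : hom A E) (p : hom E B), [/\ cof i, fib p, we p & p ⊚ i = f] }.

Arguments we {C} m {A B} f.
Arguments cof {C} m {A B} f.
Arguments fib {C} m {A B} f.

Definition cofibrant (C : category) (M : model_structure C) (A : C) : Prop :=
  forall (I : C), is_initial I -> forall z : hom I A, cof M z.

Record cs_monoidal_model_cat := CSMMC {
  mcat :> category;
  mon : closed_symmon mcat;
  model : model_structure mcat;
  pushout_product : forall (A B A' B' P : mcat) (f : hom A B) (g : hom A' B')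
      (i1 : hom (tens mon B A') P) (i2 : hom (tens mon A B') P)
      (h : hom P (tens mon B B')),
      cof model f -> cof model g ->
      is_pushout (tmap mon f (idm A')) (tmap mon (idm A) g) i1 i2 ->
      h ⊚ i1 = tmap mon (idm B) g -> h ⊚ i2 = tmap mon f (idm B') ->
      cof model h /\ (we model f \/ we model g -> we model h);
  unit_axiom : forall (Q X : mcat) (q : hom Q (unit mon)),
      cofibrant model Q -> fib model q -> we model q -> cofibrant model X ->
      we model (tmap mon q (idm X)) }.

Definition psum_fun (n m : nat) (g : 'S_n) (h : 'S_m) (k : 'I_(n + m)) : 'I_(n + m) :=
  unsplit (match split k with inl a => inl (g a) | inr b => inr (h b) end
           : 'I_n + 'I_m).

Lemma psum_inj (n m : nat) (g : 'S_n) (h : 'S_m) : injective (psum_fun g h).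
Proof.
move=> x y; rewrite /psum_fun => /(can_inj (@unsplitK n m)).
case E1: (split x) => [u|u]; case E2: (split y) => [v|v] // [] /perm_inj E;
  by rewrite -(splitK x) -(splitK y) E1 E2 E.
Qed.

Definition psum (n m : nat) (g : 'S_n) (h : 'S_m) : 'S_(n + m) := perm (@psum_inj n m g h).

Definition chi_fun (a b : nat) (k : 'I_(a + b)) : 'I_(a + b) :=
  cast_ord (addnC b a)
    (unsplit (match split k with inl x => inr x | inr y => inl y end : 'I_b + 'I_a)).

Lemma chi_inj (a b : nat) : injective (@chi_fun a b).
Proof.
move=> x y; rewrite /chi_fun => /cast_ord_inj /(can_inj (@unsplitK b a)).
case E1: (split x) => [u|u]; case E2: (split y) => [v|v] // [] E;
  by rewrite -(splitK x) -(splitK y) E1 E2 E.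
Qed.

(* the block permutation chi_{a,b} : i |-> i + b (i < a), i |-> i - a (i >= a) *)
Definition chi (a b : nat) : 'S_(a + b) := perm (@chi_inj a b).

Section Spectra.
Variables (C : category) (M : closed_symmon C) (T : C).

Fixpoint Tpow (m : nat) : C :=
  match m with 0 => unit M | m'.+1 => tens M (Tpow m') T end.

(* the symmetry isomorphism of T^{∧m} exchanging factors i and i+1 *)
Fixpoint tswap (m i : nat) : hom (Tpow m) (Tpow m) :=
  match m return hom (Tpow m) (Tpow m) with
  | 0 => idm _
  | m'.+1 =>
      if i.+1 < m' then tmap M (tswap m' i) (idm T)
      else if i.+1 == m' then
        match m' return hom (Tpow m'.+1) (Tpow m'.+1) with
        | 0 => idm _
        | k.+1 => assoc_inv M (Tpow k) T T ⊚ tmap M (idm (Tpow k)) (braid M T T)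
                    ⊚ assoc M (Tpow k) T T
        end
      else idm _
  end.

Definition castX (X : nat -> C) (p q : nat) (e : p = q) : hom (X p) (X q) :=
  match e in _ = r return hom (X p) (X r) with erefl => idm (X p) end.

Fixpoint sigma_iter (X : nat -> C) (sigma : forall n, hom (tens M (X n) T) (X n.+1))
   (n m : nat) : hom (tens M (X n) (Tpow m)) (X (n + m)) :=
  match m return hom (tens M (X n) (Tpow m)) (X (n + m)) with
  | 0 => castX X (esym (addn0 n)) ⊚ runit M (X n)
  | m'.+1 => castX X (esym (addnS n m')) ⊚ sigma (n + m')
               ⊚ tmap M (sigma_iter sigma n m') (idm T) ⊚ assoc_inv M (X n) (Tpow m') T
  end.

Record symm_spectrum := SymmSpectrum {
  X :> nat -> C;
  act : forall n, 'S_n -> hom (X n) (X n);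
  act1 : forall n, act (1%g : 'S_n) = idm (X n);
  actM : forall n (s t : 'S_n), act (s * t)%g = act t ⊚ act s;
  sigma : forall n, hom (tens M (X n) T) (X n.+1);
  (* Σ_n × Σ_m-equivariance of the iterates σ^m (checked on Σ_n and on the
     adjacent transpositions generating Σ_m) *)
  sigma_equiv_l : forall n m (g : 'S_n),
      sigma_iter sigma n m ⊚ tmap M (act g) (idm (Tpow m))
      = act (psum g 1%g) ⊚ sigma_iter sigma n m;
  sigma_equiv_r : forall n m i (Hi : i < m) (Hi1 : i.+1 < m),
      sigma_iter sigma n m ⊚ tmap M (idm (X n)) (tswap m i)
      = act (psum 1%g (tperm (Ordinal Hi) (Ordinal Hi1))) ⊚ sigma_iter sigma n m }.

Definition Om (Y : C) : C := ihom M T Y.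
Definition Om_map (Y Y' : C) (f : hom Y Y') : hom (Om Y) (Om Y') := ihom_map M T f.

Fixpoint Om_iter (l : nat) (Y : C) : C :=
  match l with 0 => Y | l'.+1 => Om_iter l' (Om Y) end.

Fixpoint Om_iter_map (l : nat) (Y Y' : C) (f : hom Y Y') : hom (Om_iter l Y) (Om_iter l Y') :=
  match l return hom (Om_iter l Y) (Om_iter l Y') with
  | 0 => f
  | l'.+1 => Om_iter_map l' (Om_map f)
  end.

Variable Xs : symm_spectrum.

Definition sigma_tilde (n : nat) : hom (Xs n) (Om (Xs n.+1)) := curry M (sigma Xs n).

Definition lambda_tilde (n : nat) : hom (Xs n) (Om (Xs (1 + n))) :=
  curry M (castX Xs (addn1 n) ⊚ act Xs (chi n 1) ⊚ castX Xs (esym (addn1 n)) ⊚ sigma Xs n).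

(* (Θ^∞ X)_n = colim_l Ω^l X_{n+l} along Ω^l σ~ *)
Definition Theta_ob (n l : nat) : C := Om_iter l (Xs (n + l)).
Definition Theta_map (n l : nat) : hom (Theta_ob n l) (Theta_ob n l.+1) :=
  Om_iter_map l.+1 (castX Xs (esym (addnS n l))) ⊚ Om_iter_map l (sigma_tilde (n + l)).

(* (R^∞ X)_n = colim_l Ω^l X_{l+n} along Ω^l λ~ *)
Definition Rinf_ob (n l : nat) : C := Om_iter l (Xs (l + n)).
Definition Rinf_map (n l : nat) : hom (Rinf_ob n l) (Rinf_ob n l.+1) :=
  Om_iter_map l (lambda_tilde (l + n)).

End Spectra.

(* The two sequential diagrams are isomorphic term by term: X_{n+l} and
   X_{l+n} are identified through the action of a permutation β_l, built
   inductively so that β_{l+1} = (β_l ⊕ 1) χ_{l+n,1}.  Equivariance of the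
   structure map σ turns this recursion into commutativity of the squares
   relating Ω^l σ~ and Ω^l λ~, and a levelwise isomorphism of sequential
   diagrams induces an isomorphism of their colimits.  Neither the model
   structure nor the cofibrancy of T plays a role. *)
From mathcomp Require Import all_boot all_fingroup.

Set Implicit Arguments.
Unset Strict Implicit.
Unset Printing Implicit Defensive.
Local Open Scope cat_scope.

Section SeqColimits.
Variable C : category.

Lemma split_epi_cancel (A B D : C) (f g : hom B D) (p : hom A B) (q : hom B A) :
  p ⊚ q = idm B -> f ⊚ p = g ⊚ p -> f = g.
Proof. by move=> pq fg; rewrite -[f]comp_id_r -[g]comp_id_r -pq !comp_assoc fg. Qed.

Lemma seq_colimit_endo_id (F : nat -> C) (f : forall l, hom (F l) (F l.+1))
    (L : C) (c : forall l, hom (F l) L) (v : hom L L) :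
  is_seq_colimit f c -> (forall l, v ⊚ c l = c l) -> v = idm L.
Proof.
move=> [cc cu] vc; have [w [_ wu]] := cu L c cc.
by rewrite (wu v vc) (wu (idm L)) // => l; rewrite comp_id_l.
Qed.

Lemma seq_colimit_iso (F G : nat -> C)
    (f : forall l, hom (F l) (F l.+1)) (g : forall l, hom (G l) (G l.+1))
    (phi : forall l, hom (F l) (G l)) (psi : forall l, hom (G l) (F l))
    (LF : C) (cF : forall l, hom (F l) LF) (LG : C) (cG : forall l, hom (G l) LG) :
    (forall l, psi l ⊚ phi l = idm (F l)) -> (forall l, phi l ⊚ psi l = idm (G l)) ->
    (forall l, phi l.+1 ⊚ f l = g l ⊚ phi l) ->
  is_seq_colimit f cF -> is_seq_colimit g cG -> isomorphic LF LG.
Proof.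
move=> psiK phiK sq colimF colimG.
have sq_inv l : psi l.+1 ⊚ g l = f l ⊚ psi l.
  rewrite -[psi l.+1 ⊚ g l]comp_id_r -(phiK l) !comp_assoc -(comp_assoc _ (g l)).
  by rewrite -sq !comp_assoc psiK comp_id_l.
have [u [uc _]] := colimF.2 LG (fun l => cG l ⊚ phi l)
  ltac:(by move=> l; rewrite -comp_assoc sq comp_assoc colimG.1).
have [v [vc _]] := colimG.2 LF (fun l => cF l ⊚ psi l)
  ltac:(by move=> l; rewrite -comp_assoc sq_inv comp_assoc colimF.1).
exists u, v; split.
- apply: seq_colimit_endo_id colimF _ => l.
  by rewrite -comp_assoc uc comp_assoc vc -comp_assoc psiK comp_id_r.
- apply: seq_colimit_endo_id colimG _ => l.
  by rewrite -comp_assoc vc comp_assoc uc -comp_assoc phiK comp_id_r.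
Qed.

End SeqColimits.

Section Casts.
Variables (C : category) (X : nat -> C).

Lemma castX_irrelevance p q (e e' : p = q) : castX X e = castX X e'.
Proof. by rewrite (eq_irrelevance e e'). Qed.

Lemma castX_trans p q r (e1 : p = q) (e2 : q = r) :
  castX X e2 ⊚ castX X e1 = castX X (etrans e1 e2).
Proof. by case: r / e2; rewrite comp_id_l. Qed.

Lemma castXK p q (e : p = q) : castX X (esym e) ⊚ castX X e = idm (X p).
Proof. by case: q / e; rewrite comp_id_l. Qed.

Lemma castXKV p q (e : p = q) : castX X e ⊚ castX X (esym e) = idm (X q).
Proof. by case: q / e; rewrite comp_id_l. Qed.

End Casts.

Section Monoidal.
Variables (C : category) (M : closed_symmon C) (T : C).

Lemma tmap_compl (A A' A'' B : C) (f' : hom A' A'') (f : hom A A') :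
  tmap M (f' ⊚ f) (idm B) = tmap M f' (idm B) ⊚ tmap M f (idm B).
Proof. by rewrite -tmap_comp comp_id_l. Qed.

Lemma assoc_inv_nat A A' B B' D D' (f : hom A A') (g : hom B B') (h : hom D D') :
  assoc_inv M A' B' D' ⊚ tmap M f (tmap M g h) = tmap M (tmap M f g) h ⊚ assoc_inv M A B D.
Proof.
rewrite -[RHS]comp_id_l -(assoc_inv_l M A' B' D') -!comp_assoc.
by rewrite (comp_assoc (assoc M A' B' D')) assoc_nat -!comp_assoc assoc_inv_r comp_id_r.
Qed.

Lemma Om_iter_map_comp l (A B D : C) (g : hom B D) (f : hom A B) :
  Om_iter_map M T l (g ⊚ f) = Om_iter_map M T l g ⊚ Om_iter_map M T l f.
Proof. by elim: l A B D g f => [//|l IH] A B D g f /=; rewrite /Om_map ihom_map_comp IH. Qed.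

Lemma Om_iter_map_id l (A : C) : Om_iter_map M T l (idm A) = idm (Om_iter M T l A).
Proof. by elim: l A => [//|l IH] A /=; rewrite /Om_map ihom_map_id IH. Qed.

Definition unit_tens (A : C) : hom (tens M A (Tpow M T 1)) (tens M A T) :=
  tmap M (runit M A) (idm T) ⊚ assoc_inv M A (unit M) T.

Lemma unit_tens_nat (A A' : C) (f : hom A A') :
  unit_tens A' ⊚ tmap M f (idm (Tpow M T 1)) = tmap M f (idm T) ⊚ unit_tens A.
Proof.
rewrite /unit_tens /= -tmap_id -comp_assoc assoc_inv_nat !comp_assoc.
by rewrite -!tmap_compl runit_nat.
Qed.

Lemma unit_tens_split_epi (A : C) : exists r, unit_tens A ⊚ r = idm (tens M A T).
Proof.
have [ri [_ riK]] := runit_iso M A.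
exists (assoc M A (unit M) T ⊚ tmap M ri (idm T)).
rewrite /unit_tens -comp_assoc (comp_assoc (assoc_inv M _ _ _)) assoc_inv_l comp_id_l.
by rewrite -tmap_compl riK tmap_id.
Qed.

End Monoidal.

Section Equivariance.
Variables (C : category) (M : closed_symmon C) (T : C) (X : symm_spectrum M T).

Lemma sigma_castX p q (e : p = q) :
  sigma X q ⊚ tmap M (castX X e) (idm T) = castX X (congr1 S e) ⊚ sigma X p.
Proof. by case: q / e; rewrite /= tmap_id comp_id_l comp_id_r. Qed.

Lemma act_cast_perm p q (e : p = q) (s : 'S_p) :
  act X (cast_perm e s) ⊚ castX X e = castX X e ⊚ act X s.
Proof. by case: q / e; rewrite cast_perm_id /= comp_id_l comp_id_r. Qed.

Lemma sigma_iter1 k :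
  sigma_iter (sigma X) k 1 = castX X (esym (addn1 k)) ⊚ sigma X k ⊚ unit_tens M T (X k).
Proof.
rewrite /= /unit_tens tmap_compl !comp_assoc -(comp_assoc _ (sigma X (k + 0))).
by rewrite sigma_castX comp_assoc castX_trans (castX_irrelevance _ _ (esym (addn1 k))).
Qed.

Lemma sigma_act k (g : 'S_k) :
  sigma X k ⊚ tmap M (act X g) (idm T)
  = act X (cast_perm (addn1 k) (psum g 1)) ⊚ sigma X k.
Proof.
have := sigma_equiv_l X 1 g; rewrite !sigma_iter1 -comp_assoc unit_tens_nat.
have [r rK] := unit_tens_split_epi M T (X k).
rewrite comp_assoc !(comp_assoc (act X _)).
move=> /(split_epi_cancel rK) /(congr1 (comp (castX X (addn1 k)))).
rewrite !comp_assoc castXKV comp_id_l => ->.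
by rewrite -act_cast_perm -(comp_assoc (act X _)) castXKV comp_id_r.
Qed.

End Equivariance.

Section LevelIso.
Variables (C : category) (M : closed_symmon C) (T : C) (X : symm_spectrum M T) (n : nat).

Fixpoint shuffle (l : nat) : 'S_(l + n) :=
  match l return 'S_(l + n) with
  | 0 => 1%g
  | l'.+1 => cast_perm (addn1 (l' + n)) (psum (shuffle l') 1 * chi (l' + n) 1)%g
  end.

Definition level_iso l : hom (X (n + l)) (X (l + n)) :=
  act X (shuffle l) ⊚ castX X (addnC n l).

Definition level_inv l : hom (X (l + n)) (X (n + l)) :=
  castX X (esym (addnC n l)) ⊚ act X (shuffle l)^-1%g.

Lemma level_isoK l : level_inv l ⊚ level_iso l = idm (X (n + l)).
Proof.
rewrite /level_inv /level_iso -comp_assoc (comp_assoc (act X _)) -actM mulgV act1.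
by rewrite comp_id_l castXK.
Qed.

Lemma level_invK l : level_iso l ⊚ level_inv l = idm (X (l + n)).
Proof.
rewrite /level_inv /level_iso -comp_assoc (comp_assoc (castX X _)) castXKV comp_id_l.
by rewrite -actM mulVg act1.
Qed.

Lemma level_iso_sigma l :
  level_iso l.+1 ⊚ castX X (esym (addnS n l)) ⊚ sigma X (n + l)
  = castX X (addn1 (l + n)) ⊚ act X (chi (l + n) 1) ⊚ castX X (esym (addn1 (l + n)))
      ⊚ sigma X (l + n) ⊚ tmap M (level_iso l) (idm T).
Proof.
rewrite /level_iso /= cast_perm_morphM actM tmap_compl !comp_assoc -act_cast_perm.
rewrite -(comp_assoc (act X (cast_perm _ (chi _ 1)))) castXKV comp_id_r.
rewrite -(comp_assoc _ (sigma X _)) sigma_act !comp_assoc.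
rewrite -(comp_assoc _ (sigma X _)) sigma_castX !comp_assoc.
by rewrite -(comp_assoc _ (castX X (addnC n l.+1))) castX_trans
  (castX_irrelevance _ (etrans _ _) (congr1 S (addnC n l))).
Qed.

End LevelIso.

Theorem mainTheorem19 (D : cs_monoidal_model_cat) (T : D)
  (HT : cofibrant (model D) T) (X : symm_spectrum (mon D) T) (n : nat)
  (LTheta : D) (cTheta : forall l, hom (Theta_ob X n l) LTheta)
  (LR : D) (cR : forall l, hom (Rinf_ob X n l) LR) :
  is_seq_colimit (Theta_map X n) cTheta ->
  is_seq_colimit (Rinf_map X n) cR ->
  isomorphic LTheta LR.
Proof.
apply: (@seq_colimit_iso _ _ _ _ _
          (fun l => Om_iter_map (mon D) T l (level_iso X n l))
          (fun l => Om_iter_map (mon D) T l (level_inv X n l))) => l.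
- by rewrite -Om_iter_map_comp level_isoK Om_iter_map_id.
- by rewrite -Om_iter_map_comp level_invK Om_iter_map_id.
- rewrite /Theta_map /Rinf_map /= -!Om_iter_map_comp; congr (Om_iter_map _ _ l _).
  rewrite /Om_map /sigma_tilde /lambda_tilde -!curry_nat_r -curry_nat_l.
  by rewrite !comp_assoc level_iso_sigma.
Qed.
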